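(* Define polynomials $P_k(x)\in\mathbb{Q}[x]$ by $P_0(x):=0$, $P_1(x):=1$, and for $k\ge2$ $$P_k(x):=-\frac{1}{(2k-1)(k-1)}\sum_{i=1}^{k-1}\left(6x\binom{2k}{2i}(2^{2i-1}-1)+\binom{2k}{2i+2}(2^{2i+1}-1)-2^{2i}\binom{2k}{2i+1}+\binom{2k}{2i}\right)P_{k-i}(x).$$ Then for $k\ge2$ we have the recurrence $$P_k(x)=(1-12x)P_{k-1}(x)-36x^2P_{k-2}(x),$$ and the explicit formula $$P_k(x)=2^{1-2k}\sum_{j=0}^{k-1}\binom{2k}{2j+1}(1-24x)^j=\frac{1}{\sqrt{1-24x}}\left(\left(\frac{1+\sqrt{1-24x}}{2}\right)^{2k}-\left(\frac{1-\sqrt{1-24x}}{2}\right)^{2k}\right).$$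
   Context: These are the polynomials $P_k$ for which the rank moment generating functions satisfy $\mathcal{R}_{2k}=P_k(\delta_q)\mathcal{R}_2+(\text{terms built from crank moments})$, where $\delta_q=q\frac{d}{dq}$; the defining recursion above is the one induced on the coefficient of $\mathcal{R}_2$. In the last expression any fixed branch of the square root may be taken. *)

From HB Require Import structures.
From mathcomp Require Import all_boot all_order all_algebra.
Set Implicit Arguments. Unset Strict Implicit. Unset Printing Implicit Defensive.
Import Order.TTheory GRing.Theory Num.Theory.
Local Open Scope ring_scope.

Definition Pcoef (k i : nat) : {poly rat} :=
  (6%:R * ('C(2*k, 2*i)%:R * ((2:rat) ^+ (2*i).-1 - 1)))%:P * 'X
  + ('C(2*k, (2*i).+2)%:R * ((2:rat) ^+ (2*i).+1 - 1)
     - (2:rat) ^+ (2*i) * 'C(2*k, (2*i).+1)%:R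
     + 'C(2*k, 2*i)%:R)%:P.

(* Given the list s = [:: P_0; ...; P_{k-1}], compute P_k (k >= 1). *)
Definition Pnext (k : nat) (s : seq {poly rat}) : {poly rat} :=
  if k == 1%N then 1 else
  (- (((2*k-1)*(k-1))%:R : rat)^-1)%:P *
    \sum_(1 <= i < k) Pcoef k i * nth 0 s (k - i).

Fixpoint Plist (n : nat) : seq {poly rat} :=
  match n with
  | 0 => [:: 0]
  | n'.+1 => let s := Plist n' in rcons s (Pnext n'.+1 s)
  end.

Definition P (k : nat) : {poly rat} := nth 0 (Plist k) k.

From HB Require Import structures.
From mathcomp Require Import all_boot all_order all_algebra.
From mathcomp Require Import ring lra zify.
Set Implicit Arguments. Unset Strict Implicit. Unset Printing Implicit Defensive.
Import Order.TTheory GRing.Theory Num.Theory.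
Local Open Scope ring_scope.

(* Write [s = sqrt (1 - 24 x)], [a = (1 + s)/2], [b = (1 - s)/2], so that
   [a + b = 1] and [a b = 6 x].  The closed form [Pclosed k] satisfies
   [s * Pclosed k = a^(2k) - b^(2k)] (binomial theorem), which makes the
   three-term recurrence immediate from [a^2 + b^2 = 1 - 12 x].  To identify
   [Pclosed] with [P] one checks that [Pclosed] obeys the defining recursion.
   Evaluated at the infinitely many rational points [x = (1 - s^2)/24] with
   [s] a positive integer, this becomes an identity between sums of the
   shape [sum_i 'C(2k, i) c^i a^(2k-i)] for [c = 1, 2], which the binomial
   theorem expresses through [(a +- 1)^(2k)], [(a +- 2)^(2k)]; the identity
   then follows by substituting [b = 1 - a]. *)

Lemma sum_ord_even_odd (V : nmodType) n (F : nat -> V) :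
  \sum_(i < (2 * n).+1) F i = \sum_(i < n.+1) F (2 * i)%N + \sum_(i < n) F (2 * i).+1.
Proof.
elim: n => [|n IH]; first by rewrite !big_ord_recr !big_ord0 /= !add0r addr0.
have -> : (2 * n.+1 = (2 * n).+2)%N by rewrite mulnS.
rewrite [LHS]big_ord_recr [in LHS]big_ord_recr /= IH.
rewrite [X in _ = X + _]big_ord_recr [X in _ = _ + X]big_ord_recr /= mulnS.
by rewrite -!addrA; congr (_ + _); rewrite [RHS]addrC -addrA.
Qed.

Lemma exprN_even (R : pzRingType) (x : R) i : (- x) ^+ (2 * i) = x ^+ (2 * i).
Proof. by rewrite !exprM sqrrN. Qed.

Lemma exprN_odd (R : pzRingType) (x : R) i : (- x) ^+ (2 * i).+1 = - x ^+ (2 * i).+1.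
Proof. by rewrite !exprS exprN_even mulNr. Qed.

Section BinomialParts.
Variables (R : comPzRingType) (u v : R) (n : nat).

Lemma exprD_even_part :
  (v + u) ^+ (2 * n) + (v - u) ^+ (2 * n) =
  2 * \sum_(i < n.+1) 'C(2 * n, 2 * i)%:R * u ^+ (2 * i) * v ^+ (2 * n - 2 * i).
Proof.
rewrite !exprDn -big_split /=.
rewrite (@sum_ord_even_odd _ n (fun i => v ^+ (2 * n - i) * u ^+ i *+ 'C(2 * n, i)
  + v ^+ (2 * n - i) * (- u) ^+ i *+ 'C(2 * n, i))).
rewrite [X in _ + X]big1 => [|i _]; last by rewrite exprN_odd mulrN mulNrn addrN.
rewrite addr0 big_distrr /=; apply: eq_bigr => i _.
by rewrite exprN_even; move: (v ^+ _) (u ^+ _) ('C(_, _)) => A B c; ring.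
Qed.

Lemma exprD_odd_part :
  (v + u) ^+ (2 * n) - (v - u) ^+ (2 * n) =
  2 * \sum_(i < n) 'C(2 * n, (2 * i).+1)%:R * u ^+ (2 * i).+1 * v ^+ (2 * n - (2 * i).+1).
Proof.
rewrite !exprDn -sumrB /=.
rewrite (@sum_ord_even_odd _ n (fun i => v ^+ (2 * n - i) * u ^+ i *+ 'C(2 * n, i)
  - v ^+ (2 * n - i) * (- u) ^+ i *+ 'C(2 * n, i))).
rewrite [X in X + _]big1 => [|i _]; last by rewrite exprN_even addrN.
rewrite add0r big_distrr /=; apply: eq_bigr => i _.
by rewrite exprN_odd; move: (v ^+ _) (u ^+ _) ('C(_, _)) => A B c; ring.
Qed.

End BinomialParts.

Definition Pclosed (k : nat) : {poly rat} :=
  (((2:rat) ^+ (2 * k).-1)^-1)%:P *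
    \sum_(j < k) 'C(2 * k, (2 * j).+1)%:R *: (1 - 24%:R *: 'X) ^+ j.

Lemma horner_Pclosed (F : numFieldType) (x s : F) k : s ^+ 2 = 1 - 24%:R * x ->
  s * (map_poly (@ratr F) (Pclosed k)).[x] =
    ((1 + s) / 2%:R) ^+ (2 * k) - ((1 - s) / 2%:R) ^+ (2 * k).
Proof.
move=> hs.
rewrite /Pclosed rmorphM /= map_polyC rmorph_sum /= hornerM hornerC horner_sum.
under eq_bigr => i _ do
  rewrite map_polyZ /= rmorphXn rmorphB /= rmorph1 map_polyZ map_polyX /= !hornerE /=.
rewrite fmorphV rmorphXn /= ratr_nat.
under eq_bigr do rewrite !ratr_nat -hs -exprM.
rewrite !expr_div_n -mulrBl exprD_odd_part.
under [X in _ = _ * X / _]eq_bigr do rewrite expr1n mulr1.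
rewrite mulrCA big_distrr /=.
under eq_bigr do rewrite mulrCA -exprS.
case: k => [|n]; first by rewrite !big_ord0 !mulr0 mul0r.
have -> : (2 * n.+1 = (2 * n).+2)%N by rewrite mulnS.
rewrite (exprS _ (2 * n).+1); move: (\sum_(i < _) _) => S.
by field; rewrite expf_neq0 // pnatr_eq0.
Qed.

Section BinomialSums.
Variables (F : numFieldType) (k : nat).

Definition even_term (a u : F) i := 'C(2 * k, 2 * i)%:R * u ^+ (2 * i) * a ^+ (2 * k - 2 * i).
Definition odd_term (a u : F) i :=
  'C(2 * k, (2 * i).+1)%:R * u ^+ (2 * i).+1 * a ^+ (2 * k - (2 * i).+1).
Definition next_even_term (a u : F) i :=
  'C(2 * k, (2 * i).+2)%:R * u ^+ (2 * i).+2 * a ^+ (2 * (k - i)).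

Lemma sum_even_term a u :
  \sum_(0 <= i < k.+1) even_term a u i = ((a + u) ^+ (2 * k) + (a - u) ^+ (2 * k)) / 2.
Proof. by rewrite exprD_even_part big_mkord mulrC mulrA mulVf ?mul1r ?pnatr_eq0. Qed.

Lemma sum_odd_term a u :
  \sum_(0 <= i < k) odd_term a u i = ((a + u) ^+ (2 * k) - (a - u) ^+ (2 * k)) / 2.
Proof. by rewrite exprD_odd_part big_mkord mulrC mulrA mulVf ?mul1r ?pnatr_eq0. Qed.

Hypothesis k_gt0 : (0 < k)%N.

Lemma sum_even_term_inner a u :
  \sum_(1 <= i < k) even_term a u i =
    ((a + u) ^+ (2 * k) + (a - u) ^+ (2 * k)) / 2 - a ^+ (2 * k) - u ^+ (2 * k).
Proof.
rewrite -sum_even_term (@big_ltn _ _ _ 0 k.+1) // (@big_nat_recr _ _ _ k 1) //=.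
rewrite /even_term muln0 bin0 subn0 subnn expr0 binn !mulr1 mul1r.
by move: (\sum_(_ <= _ < _) _) (a ^+ (2 * k)) (u ^+ (2 * k)) => S A U; ring.
Qed.

Lemma sum_next_even_term_inner a u :
  \sum_(1 <= i < k) next_even_term a u i =
    a ^+ 2 * (((a + u) ^+ (2 * k) + (a - u) ^+ (2 * k)) / 2 - a ^+ (2 * k)
              - 'C(2 * k, 2)%:R * u ^+ 2 * a ^+ (2 * k - 2)).
Proof.
rewrite -sum_even_term (@big_ltn _ _ _ 0 k.+1) // (@big_ltn _ _ _ 1 k.+1) //=.
rewrite (big_add1 _ _ 1) /=.
have -> : \sum_(1 <= i < k) next_even_term a u i = a ^+ 2 * \sum_(1 <= i < k) even_term a u i.+1.
  rewrite mulr_sumr; apply: eq_big_nat => i /andP [i_gt0 i_ltk].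
  rewrite /next_even_term /even_term mulnS !add2n.
  have -> : (2 * (k - i) = (2 * k - (2 * i).+2).+2)%N by lia.
  rewrite -[(2 * k - _).+2]addn2 exprD.
  by move: (a ^+ (2 * k - _)) (u ^+ (2 * i).+2) ('C(_, _)%:R) => A U C; ring.
rewrite /even_term muln0 bin0 subn0 expr0 !mulr1 mul1r muln1.
by move: (\sum_(_ <= _ < _) _) (a ^+ (2 * k)) ('C(2 * k, 2)%:R * u ^+ 2 * a ^+ (2 * k - 2)) => S A B; ring.
Qed.

Lemma sum_odd_term_inner a u :
  \sum_(1 <= i < k) odd_term a u i =
    ((a + u) ^+ (2 * k) - (a - u) ^+ (2 * k)) / 2 - (2 * k)%:R * u * a ^+ (2 * k).-1.
Proof.
rewrite -sum_odd_term (@big_ltn _ _ _ 0 k _ k_gt0) /odd_term muln0 bin1 expr1 subn1.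
by rewrite addrAC subrr add0r.
Qed.

End BinomialSums.

(* The coefficient [Pcoef k i] evaluated at [x = y/6]. *)
Definition Pcoef_val (F : numFieldType) k i (y : F) :=
  y * ('C(2 * k, 2 * i)%:R * (2 ^+ (2 * i).-1 - 1))
  + ('C(2 * k, (2 * i).+2)%:R * (2 ^+ (2 * i).+1 - 1)
     - 2 ^+ (2 * i) * 'C(2 * k, (2 * i).+1)%:R + 'C(2 * k, 2 * i)%:R).

Section PcoefIdentity.
Variable F : numFieldType.

Lemma Pcoef_val_expr k i (a y : F) : (0 < i < k)%N ->
  Pcoef_val k i y * a ^+ (2 * (k - i)) =
    y * (even_term k a 2 i / 2 - even_term k a 1 i)
    + next_even_term k a 2 i / 2 - next_even_term k a 1 i
    - a * odd_term k a 2 i / 2 + even_term k a 1 i.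
Proof.
case/andP=> i_gt0 i_ltk.
have e2i : (2 : F) ^+ (2 * i) = 2 * 2 ^+ (2 * i).-1 by rewrite -exprS prednK //; lia.
have [e1 e2] : a ^+ (2 * (k - i)) = a * a ^+ (2 * k - (2 * i).+1)
             /\ a ^+ (2 * k - 2 * i) = a * a ^+ (2 * k - (2 * i).+1).
  by split; rewrite -exprS; congr (_ ^+ _); lia.
rewrite /Pcoef_val /even_term /next_even_term /odd_term !expr1n e1 e2 !exprS e2i.
move: (2 ^+ (2 * i).-1) (a ^+ (2 * k - (2 * i).+1)) ('C(2 * k, 2 * i)%:R)
  ('C(2 * k, (2 * i).+1)%:R) ('C(2 * k, (2 * i).+2)%:R) => T A C0 C1 C2.
by field.
Qed.

Lemma sum_Pcoef_val_expr k (a y : F) : (0 < k)%N ->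
  \sum_(1 <= i < k) Pcoef_val k i y * a ^+ (2 * (k - i)) =
    y * ((((a + 2) ^+ (2 * k) + (a - 2) ^+ (2 * k)) / 2 - a ^+ (2 * k) - 2 ^+ (2 * k)) / 2
         - (((a + 1) ^+ (2 * k) + (a - 1) ^+ (2 * k)) / 2 - a ^+ (2 * k) - 1 ^+ (2 * k)))
    + (a ^+ 2 * (((a + 2) ^+ (2 * k) + (a - 2) ^+ (2 * k)) / 2 - a ^+ (2 * k)
                 - 'C(2 * k, 2)%:R * 2 ^+ 2 * a ^+ (2 * k - 2))) / 2
    - a ^+ 2 * (((a + 1) ^+ (2 * k) + (a - 1) ^+ (2 * k)) / 2 - a ^+ (2 * k)
                - 'C(2 * k, 2)%:R * 1 ^+ 2 * a ^+ (2 * k - 2))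
    - a * (((a + 2) ^+ (2 * k) - (a - 2) ^+ (2 * k)) / 2 - (2 * k)%:R * 2 * a ^+ (2 * k).-1) / 2
    + (((a + 1) ^+ (2 * k) + (a - 1) ^+ (2 * k)) / 2 - a ^+ (2 * k) - 1 ^+ (2 * k)).
Proof.
move=> k_gt0; rewrite (eq_big_nat _ _ (fun i hi => @Pcoef_val_expr k i a y hi)).
rewrite !big_split /= !sumrN -mulr_sumr big_split /= sumrN -!mulr_suml -mulr_sumr.
by rewrite !sum_even_term_inner // !sum_next_even_term_inner // sum_odd_term_inner.
Qed.

(* The defining recursion, with [P j] replaced by [a^(2j) - (1-a)^(2j)] and [6x] by [a(1-a)]. *)
Lemma Pcoef_val_recursion m (a : F) : (0 < m)%N ->
  \sum_(1 <= i < m.+1) Pcoef_val m.+1 i (a * (1 - a))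
      * (a ^+ (2 * (m.+1 - i)) - (1 - a) ^+ (2 * (m.+1 - i)))
  + ((2 * m.+1).-1 * m)%:R * (a ^+ (2 * m.+1) - (1 - a) ^+ (2 * m.+1)) = 0.
Proof.
move=> m_gt0.
under eq_big_nat => i _ do rewrite mulrBr.
rewrite sumrB !sum_Pcoef_val_expr //.
have -> : a - 1 = - (1 - a) by ring.
have -> : a - 2 = - ((1 - a) + 1) by ring.
have -> : 1 - a - 1 = - a by ring.
have -> : 1 - a - 2 = - (a + 1) by ring.
rewrite !exprN_even !expr1n.
have -> : (2 * m.+1 - 2 = 2 * m)%N by lia.
have -> : ((2 * m.+1).-1 = (2 * m).+1)%N by lia.
have -> : (2 * m.+1 = (2 * m).+2)%N by lia.
have -> : 'C((2 * m).+2, 2) = (m.+1 * (2 * m).+1)%N by rewrite bin2 -divn2 /=; lia.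
rewrite !exprS !expr0 !natrM -!natr1 !natrM.
move: (a ^+ (2 * m)) ((1 - a) ^+ (2 * m)) ((a + 2) ^+ (2 * m)) ((1 - a + 2) ^+ (2 * m))
  ((a + 1) ^+ (2 * m)) ((1 - a + 1) ^+ (2 * m)) (2 ^+ (2 * m) : F) (m%:R : F) => A B X1 X2 Y1 Y2 T M.
by field.
Qed.

End PcoefIdentity.

Lemma size_Plist n : size (Plist n) = n.+1.
Proof. by elim: n => [|n IH] //=; rewrite size_rcons IH. Qed.

Lemma nth_Plist n i : (i <= n)%N -> nth 0 (Plist n) i = P i.
Proof.
elim: n => [|n IH]; first by rewrite leqn0 => /eqP ->.
rewrite leq_eqVlt => /orP [/eqP -> // | i_le_n].
by rewrite /= nth_rcons size_Plist i_le_n IH.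
Qed.

Lemma P_succ n : P n.+1 = Pnext n.+1 (Plist n).
Proof. by rewrite /P /= nth_rcons size_Plist ltnn eqxx. Qed.

Lemma ratr_rat (x : rat) : ratr x = x.
Proof. by rewrite /ratr divq_num_den. Qed.

Lemma map_poly_ratr_rat (p : {poly rat}) : map_poly (@ratr rat) p = p.
Proof. by apply: map_poly_id => y _; rewrite ratr_rat. Qed.

Lemma poly_eq0_at_sqr_nodes (p : {poly rat}) :
  (forall n : nat, p.[(1 - n.+1%:R ^+ 2) / 24%:R] = 0) -> p = 0.
Proof.
move=> p_nodes; apply/eqP; apply: contraT => p_neq0.
pose nodes := [seq (1 - n.+1%:R ^+ 2) / 24%:R : rat | n <- iota 0 (size p)].
have roots_p : all (root p) nodes by apply/allP => y /mapP [n _ ->]; apply/rootP.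
have uniq_nodes : uniq nodes.
  rewrite map_inj_uniq ?iota_uniq // => u v huv.
  have : (u.+1%:R ^+ 2 : rat) = v.+1%:R ^+ 2.
    by move: huv; move: (u.+1%:R ^+ 2 : rat) (v.+1%:R ^+ 2 : rat) => U V; lra.
  by rewrite -!natrX => /eqP; rewrite eqr_nat eqn_sqr => /eqP [].
have := max_poly_roots p_neq0 roots_p uniq_nodes.
by rewrite size_map size_iota ltnn.
Qed.

Lemma horner_Pclosed_rat k (s : rat) :
  s * (Pclosed k).[(1 - s ^+ 2) / 24%:R] =
    ((1 + s) / 2) ^+ (2 * k) - (1 - (1 + s) / 2) ^+ (2 * k).
Proof.
rewrite -[Pclosed k]map_poly_ratr_rat horner_Pclosed; last by field.
by congr (_ - _ ^+ _); field.
Qed.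

Lemma horner_Pcoef k i (s : rat) :
  (Pcoef k i).[(1 - s ^+ 2) / 24%:R] = Pcoef_val k i ((1 + s) / 2 * (1 - (1 + s) / 2)).
Proof.
rewrite /Pcoef /Pcoef_val !hornerE /=.
move: ('C(2 * k, 2 * i)%:R : rat) ('C(2 * k, (2 * i).+1)%:R : rat) ('C(2 * k, (2 * i).+2)%:R : rat)
  ((2 : rat) ^+ (2 * i).-1) ((2 : rat) ^+ (2 * i)) ((2 : rat) ^+ (2 * i).+1) => c0 c1 c2 t0 t1 t2.
by field.
Qed.

Lemma Pclosed_recursion m : (0 < m)%N ->
  \sum_(1 <= i < m.+1) Pcoef m.+1 i * Pclosed (m.+1 - i)
  + (((2 * m.+1).-1 * m)%:R)%:P * Pclosed m.+1 = 0.
Proof.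
move=> m_gt0; apply: poly_eq0_at_sqr_nodes => n.
have s_neq0 : (n.+1%:R : rat) != 0 by rewrite pnatr_eq0.
apply: (mulfI s_neq0); rewrite mulr0; move: (n.+1%:R : rat) s_neq0 => s _.
rewrite hornerD horner_sum hornerM hornerC mulrDr mulr_sumr.
under eq_bigr => i _ do rewrite hornerM mulrCA horner_Pclosed_rat horner_Pcoef.
by rewrite mulrCA horner_Pclosed_rat Pcoef_val_recursion.
Qed.

Lemma P_Pclosed k : P k = Pclosed k.
Proof.
elim/ltn_ind: k => -[|[|m]] IH.
- by rewrite /P /Pclosed /= big_ord0 mulr0.
- rewrite /P /= /Pnext /= /Pclosed big_ord1 /= expr1 bin1 muln1 expr0.
  by rewrite alg_polyC -polyCM mulVf.
rewrite P_succ /Pnext /=.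
have -> : \sum_(1 <= i < m.+2) Pcoef m.+2 i * nth 0 (Plist m.+1) (m.+2 - i)
        = \sum_(1 <= i < m.+2) Pcoef m.+2 i * Pclosed (m.+2 - i).
  by apply: eq_big_nat => i /andP [i_gt0 i_le]; rewrite nth_Plist ?IH //; lia.
move/eqP: (Pclosed_recursion (isT : (0 < m.+1)%N)); rewrite addr_eq0 => /eqP ->.
have -> : ((2 * m.+2 - 1) * (m.+2 - 1) = (2 * m.+2).-1 * m.+1)%N by lia.
rewrite mulrN polyCN mulNr opprK mulrA -polyCM mulVf ?polyC1 ?mul1r //.
by rewrite pnatr_eq0 -lt0n; lia.
Qed.

Lemma Pclosed_three_term m :
  Pclosed m.+2 = (1 - 12%:R *: 'X) * Pclosed m.+1 - 36%:R *: 'X ^+ 2 * Pclosed m.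
Proof.
apply/eqP; rewrite -subr_eq0; apply/eqP; apply: poly_eq0_at_sqr_nodes => n.
have s_neq0 : (n.+1%:R : rat) != 0 by rewrite pnatr_eq0.
apply: (mulfI s_neq0); rewrite mulr0; move: (n.+1%:R : rat) s_neq0 => s _.
have h0 := horner_Pclosed_rat m s; have h1 := horner_Pclosed_rat m.+1 s.
have h2 := horner_Pclosed_rat m.+2 s.
move: (Pclosed m.+2) (Pclosed m.+1) (Pclosed m) h0 h1 h2 => q2 q1 q0.
rewrite !(hornerD, hornerN, hornerM, hornerZ, hornerX, hornerC, hornerXn).
move: q2.[_] q1.[_] q0.[_] => y2 y1 y0.
have -> : (2 * m.+2 = (2 * m).+4)%N by lia.
have -> : (2 * m.+1 = (2 * m).+2)%N by lia.
rewrite !exprS; move: (((1 + s) / 2) ^+ (2 * m)) ((1 - (1 + s) / 2) ^+ (2 * m)) => A B h0 h1 h2.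
rewrite expr0 mulr1.
have -> : forall x : rat, s * (y2 - ((1 - 12%:R * x) * y1 - 36%:R * (x * x) * y0))
    = s * y2 - (1 - 12%:R * x) * (s * y1) + 36%:R * (x * x) * (s * y0) by move=> x; ring.
by rewrite h0 h1 h2; field.
Qed.

Theorem proposition7p1 (k : nat) (hk : (2 <= k)%N) :
  P k = (1 - 12%:R *: 'X) * P k.-1 - 36%:R *: 'X ^+ 2 * P k.-2 /\
  P k = (((2:rat) ^+ (2*k).-1)^-1)%:P *
          \sum_(j < k) 'C(2*k, (2*j).+1)%:R *: (1 - 24%:R *: 'X) ^+ j /\
  (forall (F : numFieldType) (x s : F), s ^+ 2 = 1 - 24%:R * x -> s != 0 ->
     (map_poly (@ratr F) (P k)).[x] =
       s^-1 * (((1 + s) / 2%:R) ^+ (2*k) - ((1 - s) / 2%:R) ^+ (2*k))).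
Proof.
split; [|split].
- by case: k hk => [|[|m]] // _; rewrite /= !P_Pclosed Pclosed_three_term.
- exact: P_Pclosed.
- move=> F x s hs s_neq0.
  by rewrite -(horner_Pclosed k hs) P_Pclosed mulrA mulVf ?mul1r.
Qed.
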